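(* Let $q$ be an odd prime power, $d$ an even positive integer, and $A\subset\mathbb F_q^d$. Let $\mathcal{ZR}(A)$ be the number of pairs $(x,y)\in A\times A$ with $\|x-y\|=0$, and let $\Omega^0(A)=\sum_{m\in\mathbb F_q^d:\ \|m\|=0}|\widehat A(m)|^2$. \begin{enumerate} \item If $d\equiv 2\pmod 4$ and $q\equiv 3\pmod 4$, then $$\frac{\mathcal{ZR}(A)}{2}=\frac{|A|^2}{2q}-\frac{q^{\frac{3d}{2}}}{2}\Omega^0(A)+\frac{q^{\frac{d-2}{2}}|A|}{2}.$$ \item If $d\equiv 0\pmod 4$, or $d\equiv 2\pmod 4$ and $q\equiv 1\pmod 4$, then $$\frac{\mathcal{ZR}(A)}{2}=\frac{|A|^2}{2q}+\frac{q^{\frac{3d}{2}}}{2}\Omega^0(A)-\frac{q^{\frac{d-2}{2}}|A|}{2}.$$ \end{enumerate}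
   Context: For $x\in\mathbb F_q^d$, $\|x\|=x_1^2+\cdots+x_d^2$. $\chi$ is the canonical nontrivial additive character of $\mathbb F_q$, and for $A\subset\mathbb F_q^d$, $\widehat{A}(m)=q^{-d}\sum_{x\in A}\chi(-m\cdot x)$ is the Fourier transform of the indicator function of $A$. *)

From mathcomp Require Import all_boot all_order all_algebra all_field.
Set Implicit Arguments. Unset Strict Implicit. Unset Printing Implicit Defensive.
Import Order.TTheory GRing.Theory Num.Theory.
Local Open Scope ring_scope.

Section Defs.
Variable F : finFieldType.

(* q = #|F| = p ^ n with p the characteristic *)
Definition charp : nat := pdiv #|F|.
Definition extdeg : nat := logn charp #|F|.

(* absolute trace F_q -> F_p (lands in the prime subfield) *)
Definition abstrace (x : F) : F := \sum_(i < extdeg) x ^+ (charp ^ i).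

Definition trace_nat (x : F) : nat :=
  if [pick k : 'I_charp | (k%:R : F) == abstrace x] is Some k then val k else 0%N.

(* omega = e^{2 pi i / p}: p.-root (-1) is e^{i pi / p} (minimal argument) *)
Definition omega : algC := (charp.-root (-1)) ^+ 2.

Definition chi (x : F) : algC := omega ^+ trace_nat x.

Variable d : nat.

Definition sqnorm (x : 'rV[F]_d) : F := \sum_(i < d) (x ord0 i) ^+ 2.
Definition dotp (m x : 'rV[F]_d) : F := \sum_(i < d) m ord0 i * x ord0 i.

Definition fourier (A : {set 'rV[F]_d}) (m : 'rV[F]_d) : algC :=
  (#|F|%:R ^+ d)^-1 * \sum_(x in A) chi (- dotp m x).

Definition ZR (A : {set 'rV[F]_d}) : nat :=
  #|[set xy in setX A A | sqnorm (xy.1 - xy.2) == 0]|.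

Definition Omega0 (A : {set 'rV[F]_d}) : algC :=
  \sum_(m : 'rV[F]_d | sqnorm m == 0) `|fourier A m| ^+ 2.
End Defs.

(* By Parseval, [Omega0(A) = q^-2d sum_(x, y in A) K(x - y)] with the cone sum
   [K(w) = sum_(||m|| = 0) chi (m . w)].  Writing [q [||m|| = 0] = sum_s chi (s ||m||)] and
   completing the square in each coordinate turns [q K(w)] into a sum over [s] of products of
   [d] Gauss sums [g(s) = sum_t chi (s t^2)], and [g(s)^2 = (-1)^((q-1)/2) q]; hence
   [q K(w) = q^d [w = 0] + ((-1)^((q-1)/2) q)^(d/2) (q [||w|| = 0] - 1)].  Summed over pairs of
   points of [A], the last indicator counts [ZR(A)], and the sign [(-1)^((q-1)/2 * d/2)] is [-1]
   exactly when [d = 2 mod 4] and [q = 3 mod 4]. *)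

From mathcomp Require Import all_boot all_order all_algebra all_field zify ring.
Set Implicit Arguments. Unset Strict Implicit. Unset Printing Implicit Defensive.
Import Order.TTheory GRing.Theory Num.Theory.
Local Open Scope ring_scope.

(* [n.-root (-1)] has the largest real part among the n-th roots of [-1] in the closed upper
   half-plane; if it were [-1], so would be [-w] or [-w^*] for a primitive n-th root [w != 1]. *)
Lemma rootCN1_neqN1 n : odd n -> (1 < n)%N -> n.-root (-1 : algC) != -1.
Proof.
move=> odd_n n_gt1; have n_gt0 := ltnW n_gt1.
have [w w_prim] := C_prim_root_exists n_gt0.
have w_neq1 : w != 1.
  apply: contraTneq n_gt1 => w1; move: (prim_order_dvd w_prim 1).
  by rewrite w1 expr1n eqxx dvdn1 => /eqP ->.
have wn1 := prim_expr_order w_prim.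
have Re1 : 'Re (1 : algC) = 1 by apply/Creal_ReP; exact: real1.
have Im1 : 'Im (1 : algC) = 0 by apply/Creal_ImP; exact: real1.
have Nn (z : algC) : z ^+ n = 1 -> (- z) ^+ n = -1.
  by move=> zn; rewrite exprNn zn mulr1 -signr_odd odd_n.
suff unit_Re (z : algC) : z ^+ n = 1 -> 0 <= 'Im (- z) -> 'Re (- z) <= -1 -> z = 1.
  apply/eqP => rootN1.
  have Re_le (y : algC) : y ^+ n = -1 -> 0 <= 'Im y -> 'Re y <= -1.
    by move=> yn yIm; have := rootC_Re_max n_gt0 yn yIm; rewrite rootN1 raddfN /= Re1.
  have [Im_ge0 | /ltW Im_le0] := real_ge0P (Creal_Im (- w)).
    by move: w_neq1; rewrite (unit_Re w) ?eqxx // Re_le ?Nn.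
  have wcn1 : w^* ^+ n = 1 by rewrite -rmorphXn wn1 rmorph1.
  have Imc : 0 <= 'Im (- w^*) by rewrite -rmorphN Im_conj oppr_ge0.
  move: w_neq1; rewrite -(can_eq (@conjCK _)) rmorph1 (unit_Re _ wcn1) ?eqxx //.
  by rewrite Re_le ?Nn.
move=> zn1 Im_ge0 Re_le.
have norm_z : `|- z| = 1.
  by apply/eqP; rewrite -(pexpr_eq1 n_gt0) // -normrX Nn // normrN1.
have Re_z : 'Re (- z) = -1.
  have [Re_ge _] := leif_Re_Creal z.
  apply/eqP; rewrite eq_le Re_le -lerN2 opprK -raddfN /= opprK.
  by rewrite -norm_z normrN.
apply: oppr_inj; apply: eqC_semipolar.
- by rewrite norm_z normrN1.
- by rewrite Re_z raddfN /= Re1.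
- by rewrite [X in _ * X]raddfN /= Im1 oppr0 mulr0.
Qed.

Lemma sum_rV_prod (T : finType) (R : comNzSemiRingType) d (f : 'I_d -> T -> R) :
  \sum_(m : 'rV[T]_d) \prod_(i < d) f i (m ord0 i) = \prod_(i < d) \sum_(t : T) f i t.
Proof.
rewrite bigA_distr_bigA /= (reindex (fun g : {ffun 'I_d -> T} => \row_i g i)) /=.
  by apply: eq_bigr => g _; apply: eq_bigr => i _; rewrite mxE.
exists (fun m : 'rV_d => [ffun i => m ord0 i]) => [g _|m _].
  by apply/ffunP => i; rewrite ffunE mxE.
by apply/rowP => i; rewrite mxE ffunE.
Qed.

Lemma odd_half_even n : ~~ odd n -> odd n./2 = (n %% 4 == 2)%N.
Proof. by move=> even_n; have := modn2 n; have := modn2 n./2; rewrite -divn2; lia. Qed.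

Lemma odd_half_odd n : odd n -> odd n./2 = (n %% 4 == 3)%N.
Proof. by move=> odd_n; have := modn2 n; have := modn2 n./2; rewrite -divn2; lia. Qed.

Lemma natr_card_neq0 (T : finType) (R : numDomainType) (t : T) : #|T|%:R != 0 :> R.
Proof. by rewrite pnatr_eq0 -lt0n; apply/card_gt0P; exists t. Qed.

Section PrimeCharacteristic.
Variable F : finFieldType.
Local Notation p := (charp F).
Local Notation n := (extdeg F).

Lemma charp_spec : [/\ prime p, p \in [pchar F], #|F| = (p ^ n)%N & (0 < n)%N].
Proof.
have [p0 p0_prime p0_char] := finPcharP F.
have cardF : #|F| = (p0 ^ logn p0 #|F|)%N := card_pprimeChar p0_char.
have logn_gt0 : (0 < logn p0 #|F|)%N.
  by rewrite lt0n; apply: contraTneq (finNzRing_gt1 F) => e; rewrite cardF e.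
rewrite /extdeg; suff -> : p = p0 by [].
by rewrite /charp cardF -(prednK logn_gt0) pdiv_pfactor.
Qed.

Lemma charp_prime : prime p. Proof. by case: charp_spec. Qed.

Lemma charp_pchar : p \in [pchar F]. Proof. by case: charp_spec. Qed.

Lemma card_charp : #|F| = (p ^ n)%N. Proof. by case: charp_spec. Qed.

Lemma extdeg_gt0 : (0 < n)%N. Proof. by case: charp_spec. Qed.

Lemma charp_gt1 : (1 < p)%N. Proof. exact: prime_gt1 charp_prime. Qed.

Lemma natr_eq_charp k j : (k%:R == j%:R :> F) = (k == j %[mod p]).
Proof.
wlog le_jk : k j / (j <= k)%N.
  move=> W; case: (leqP j k) => [/W // | /ltnW /W].
  by rewrite eq_sym => ->; rewrite eq_sym.
by rewrite eqn_mod_dvd // (dvdn_pcharf charp_pchar) natrB // subr_eq0.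
Qed.

Lemma abstraceD : {morph abstrace (F:=F) : x y / x + y}.
Proof.
move=> x y; rewrite /abstrace -big_split; apply: eq_bigr => i _ /=.
by apply: exprDn_pchar; rewrite pnatX (pnatE _ charp_prime) charp_pchar.
Qed.

Lemma abstrace_frobenius (x : F) : abstrace x ^+ p = abstrace x.
Proof.
rewrite /abstrace -(pFrobenius_autE charp_pchar) rmorph_sum /=.
under eq_bigr do rewrite pFrobenius_autE -exprM -expnSr.
have x_card : x ^+ (p ^ n) = x by rewrite -card_charp expf_card.
have [m n_eq] : exists m, n = m.+1 by exists n.-1; rewrite prednK ?extdeg_gt0.
rewrite n_eq in x_card *.
by rewrite big_ord_recr big_ord_recl /= x_card expn0 expr1 addrC.
Qed.

(* The fixed points of Frobenius are roots of ['X^p - 'X], and the [p] elements [k%:R]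
   already exhaust them. *)
Lemma frobenius_fixed_natr (y : F) : y ^+ p = y -> exists k : 'I_p, k%:R = y.
Proof.
move=> yp; suff /existsP [k /eqP <-] : [exists k : 'I_p, k%:R == y] by exists k.
apply: contraT => /existsPn y_notin.
pose P : {poly F} := 'X^p - 'X.
have size_P : size P = p.+1.
  by rewrite size_polyDl ?size_polyXn // size_polyN size_polyX ltnS charp_gt1.
have P_neq0 : P != 0 by rewrite -size_poly_eq0 size_P.
have := max_poly_roots P_neq0 (rs := y :: [seq k%:R | k : 'I_p]).
rewrite size_P /= size_map size_enum_ord ltnn /root !hornerE yp subrr eqxx /=.
apply.
  apply/allP => _ /mapP [k _ ->].
  by rewrite !hornerE -(pFrobenius_autE charp_pchar) pFrobenius_aut_nat subrr.
apply/andP; split; first by apply/mapP => [[k _ /esym/eqP]]; apply/negP.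
rewrite map_inj_uniq ?enum_uniq // => k j /eqP.
by rewrite natr_eq_charp !modn_small // => /eqP /val_inj.
Qed.

Lemma trace_natE (x : F) : (trace_nat x)%:R = abstrace x.
Proof.
have [k k_tr] := frobenius_fixed_natr (abstrace_frobenius x).
rewrite /trace_nat; case: pickP => [j /eqP // | /(_ k)].
by rewrite -k_tr eqxx.
Qed.

Lemma trace_natD (x y : F) : trace_nat (x + y) = (trace_nat x + trace_nat y) %[mod p].
Proof. by apply/eqP; rewrite -natr_eq_charp natrD !trace_natE abstraceD. Qed.

(* [abstrace] is a nonzero polynomial of degree [p ^ n.-1 < #|F|], so it cannot vanish
   on all of [F]. *)
Lemma abstrace_neq0 : exists x : F, abstrace x != 0.
Proof.
suff /existsP [x ?] : [exists x : F, abstrace x != 0] by exists x.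
apply: contraT => /existsPn /= tr0.
pose P : {poly F} := \sum_(i < n) 'X^(p ^ i).
have P1 : P`_1 = 1.
  rewrite coef_sum (bigD1 (Ordinal extdeg_gt0)) //= expn0 coefXn eqxx big1 ?addr0 //.
  move=> [[|i] lt_i] //= _; rewrite coefXn eq_sym.
  by rewrite -(expn0 p) eqn_exp2l ?charp_gt1.
have P_neq0 : P != 0 by apply: contra_eqN P1 => /eqP ->; rewrite coef0 eq_sym oner_eq0.
have size_P : (size P <= (p ^ n.-1).+1)%N.
  apply: leq_trans (size_sum _ _ _) _; apply/bigmax_leqP => i _.
  by rewrite size_polyXn ltnS leq_exp2l ?charp_gt1 // -ltnS prednK ?extdeg_gt0.
have := max_poly_roots P_neq0 (rs := enum F).
rewrite enum_uniq -cardE card_charp -(prednK extdeg_gt0) expnS.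
have -> /= : all (root P) (enum F).
  apply/allP => x _; rewrite /root horner_sum.
  by under eq_bigr do rewrite hornerXn; exact: negbNE (tr0 x).
move=> /(_ isT isT) /leq_trans /(_ size_P).
by rewrite ltnS leqNgt ltn_Pmull ?charp_gt1 ?expn_gt0 ?prime_gt0 ?charp_prime.
Qed.

Hypothesis oddF : odd #|F|.

Lemma charp_odd : odd p.
Proof.
move: oddF; rewrite card_charp oddX => /orP [/eqP n0|//].
by move: extdeg_gt0; rewrite n0.
Qed.

Lemma omega_prim : p.-primitive_root (omega F).
Proof.
have p_gt0 := ltnW charp_gt1; set r := p.-root (-1 : algC).
have rp : r ^+ p = -1 by rewrite rootCK.
have omega_p : omega F ^+ p = 1 by rewrite /omega -exprM mulnC exprM rp sqrrN expr1n.
have omega_neq1 : omega F != 1.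
  rewrite /omega -/r sqrf_eq1 negb_or rootCN1_neqN1 ?charp_odd ?charp_gt1 // andbT.
  apply/eqP => r1; move: rp; rewrite r1 expr1n => /eqP.
  by rewrite -addr_eq0 -[1 + 1]/(2%:R) pnatr_eq0.
have [m m_prim m_dvd] := prim_order_exists p_gt0 omega_p.
have [_ p_div] := primeP charp_prime.
case/orP: (p_div m m_dvd) => /eqP m_eq; last by rewrite -m_eq.
by move: omega_neq1; rewrite -(prim_expr_order m_prim) m_eq expr1 eqxx.
Qed.

Lemma chiD : {morph chi (F:=F) : x y / x + y >-> x * y}.
Proof.
move=> x y.
by rewrite /chi -exprD -(prim_expr_mod omega_prim) trace_natD (prim_expr_mod omega_prim).
Qed.

Lemma chi0 : chi (0 : F) = 1.
Proof.
have chi0_neq0 : chi (0 : F) != 0.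
  by rewrite expf_neq0 // (prim_root_eq0 omega_prim) -lt0n ltnW ?charp_gt1.
by apply: (mulfI chi0_neq0); rewrite -chiD addr0 mulr1.
Qed.

Lemma chi_nontrivial : exists x : F, chi x != 1.
Proof.
have [x tr_x] := abstrace_neq0; exists x; rewrite -trace_natE in tr_x.
rewrite /chi -(prim_order_dvd omega_prim); apply: contra tr_x => p_dvd.
by rewrite -(dvdn_pcharf charp_pchar).
Qed.

Lemma natr2_neq0 : (2%:R : F) != 0.
Proof.
rewrite -(dvdn_pcharf charp_pchar); apply: contraL charp_odd.
by rewrite dvdn_prime2 ?charp_prime // => /eqP ->.
Qed.

Lemma natr4_neq0 : (4%:R : F) != 0.
Proof. by rewrite -[4%N]/(2 * 2)%N natrM mulf_neq0 ?natr2_neq0. Qed.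

End PrimeCharacteristic.

Section Squares.
Variable F : finFieldType.
Hypothesis oddF : odd #|F|.
Local Notation q := #|F|.

Lemma expf_card_pred (x : F) : x != 0 -> x ^+ q.-1 = 1.
Proof.
move=> x_neq0; apply: (mulfI x_neq0).
by rewrite mulr1 -exprS prednK ?expf_card // ltnW ?finNzRing_gt1.
Qed.

Lemma card_pred_half : q.-1 = (q %/ 2 * 2)%N.
Proof. by rewrite {1}(divn_eq q 2) modn2 oddF addn1. Qed.

Lemma sqrN1P : reflect (exists i : F, i ^+ 2 = -1) (~~ odd (q %/ 2)).
Proof.
apply: (iffP idP) => [even_half | [i i2]]; last first.
  have i_neq0 : i != 0 by apply: contra_eq_neq i2 => ->; rewrite expr0n eq_sym oppr_eq0 oner_eq0.
  apply/negP => odd_half; move/eqP: (expf_card_pred i_neq0).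
  rewrite card_pred_half mulnC exprM i2 -signr_odd odd_half expr1 eq_sym -addr_eq0.
  by rewrite -[1 + 1]/(2%:R) (negPf (natr2_neq0 oddF)).
have q_gt1 := finNzRing_gt1 F.
set k := (q %/ 2)./2.
have half_eq : (q %/ 2 = 2 * k)%N by rewrite -[LHS]odd_double_half (negPf even_half) mul2n.
have k_gt0 : (0 < k)%N by move: q_gt1; rewrite {1}(divn_eq q 2) half_eq modn2 oddF; lia.
have [x x_neq0 x_root] : exists2 x : F, x != 0 & x ^+ (2 * k) != 1.
  suff /allPn [x] : ~~ all (2 * k).-unity_root (enum [set~ (0 : F)]).
    by rewrite mem_enum !inE unity_rootE => ? ?; exists x.
  apply/negP => all_root.
  have := max_unity_roots (_ : (0 < 2 * k)%N) all_root (enum_uniq _).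
  by rewrite -cardE cardsC1 card_pred_half half_eq; lia.
exists (x ^+ k); apply/eqP; rewrite -exprM mulnC.
suff : x ^+ (2 * k) ^+ 2 == 1 by rewrite sqrf_eq1 (negPf x_root).
by rewrite -exprM -half_eq -card_pred_half expf_card_pred.
Qed.

Definition nsqrt (a : F) : nat := #|[set t : F | t ^+ 2 == a]|.

Lemma nsqrt_le2 a : (nsqrt a <= 2)%N.
Proof.
rewrite /nsqrt; have [->|[t]] := set_0Vmem [set t : F | t ^+ 2 == a]; first by rewrite cards0.
rewrite inE => /eqP <-; apply: leq_trans (_ : #|[set t; - t]| <= 2)%N; last first.
  by rewrite cards2; case: (_ != _).
by apply/subset_leq_card/subsetP => u; rewrite !inE eqf_sqr.
Qed.

Lemma nsqrt0 : nsqrt 0 = 1%N.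
Proof.
rewrite /nsqrt -(cards1 (0 : F)); congr #|pred_of_set _|.
by apply/setP => t; rewrite !inE expf_eq0.
Qed.

Lemma sum_nsqrt : (\sum_(a : F) nsqrt a = q)%N.
Proof.
under eq_bigr do rewrite /nsqrt -sum1_card.
rewrite -[q]sum1_card (exchange_big_dep xpredT) //=; apply: eq_bigr => t _.
by rewrite (big_pred1 (t ^+ 2)) // => a; rewrite inE eq_sym.
Qed.

Section NoSquareRootOfMinusOne.
Hypothesis noN1sqrt : forall i : F, i ^+ 2 != -1.

Lemma nsqrtN_le2 a : (nsqrt a + nsqrt (- a) <= 2)%N.
Proof.
have [->|a_neq0] := eqVneq a 0; first by rewrite oppr0 nsqrt0.
have [->|] := posnP (nsqrt a); first by rewrite nsqrt_le2.
have [->|] := posnP (nsqrt (- a)); first by rewrite addn0 nsqrt_le2.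
rewrite !card_gt0 => /set0Pn [u]; rewrite inE => /eqP u2 /set0Pn [t]; rewrite inE => /eqP t2.
have u_neq0 : u != 0 by apply: contra_eq_neq u2 => ->; rewrite expr0n eq_sym oppr_eq0.
by move: (noN1sqrt (t / u)); rewrite expr_div_n t2 u2 invrN mulrN mulfV ?eqxx.
Qed.

(* The [q] values [nsqrt b + nsqrt (- b)] are at most [2] and add up to [2 q]. *)
Lemma nsqrtN a : (nsqrt a + nsqrt (- a) = 2)%N.
Proof.
have sum_pairs : (\sum_(b : F) (nsqrt b + nsqrt (- b)) = \sum_(b : F) 2)%N.
  rewrite big_split /= sum_nsqrt (reindex_inj (@oppr_inj F)) /=.
  under [X in (_ + X)%N]eq_bigr do rewrite opprK.
  by rewrite sum_nsqrt sum_nat_const cardT muln2 addnn.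
have [_] := @leqif_sum F xpredT _ _ (fun=> 2%N) (fun b _ => leqif_eq (nsqrtN_le2 b)).
by rewrite sum_pairs eqxx => /esym /forallP /(_ a) /eqP.
Qed.

End NoSquareRootOfMinusOne.

End Squares.

Section AdditiveCharacter.
Variables (F : finFieldType) (psi : F -> algC).
Hypothesis psiD : {morph psi : x y / x + y >-> x * y}.
Hypothesis psi0 : psi 0 = 1.
Hypothesis psi_nontrivial : exists c : F, psi c != 1.
Local Notation q := #|F|.

Lemma psi_neq0 x : psi x != 0.
Proof.
apply: contra_eq_neq psi0 => psi_x0.
by rewrite -(subrr x) psiD psi_x0 mul0r eq_sym oner_eq0.
Qed.

Lemma psi_sum (I : Type) (r : seq I) (P : pred I) (f : I -> F) :
  psi (\sum_(i <- r | P i) f i) = \prod_(i <- r | P i) psi (f i).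
Proof. exact: (big_morph psi psiD psi0). Qed.

Lemma sum_psi_mul (a : F) : \sum_(x : F) psi (a * x) = if a == 0 then q%:R else 0.
Proof.
have [->|a_neq0] := eqVneq a 0.
  by under eq_bigr do rewrite mul0r psi0; rewrite sumr_const.
have -> : \sum_(x : F) psi (a * x) = \sum_(x : F) psi x.
  by rewrite [RHS](reindex_inj (mulfI a_neq0)).
have [c psi_c] := psi_nontrivial.
have shift : \sum_(x : F) psi x = psi c * \sum_(x : F) psi x.
  by rewrite {1}(reindex_inj (addrI c)) mulr_sumr; apply: eq_bigr => x _; rewrite psiD.
apply/eqP; move/eqP: shift; rewrite -subr_eq0 -{1}(mul1r (\sum_x _)) -mulrBl.
by rewrite mulf_eq0 subr_eq0 eq_sym (negPf psi_c).
Qed.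

Lemma psiMn x k : psi (x *+ k) = psi x ^+ k.
Proof. by elim: k => [|k IHk]; rewrite ?psi0 // mulrS psiD IHk exprS. Qed.

Lemma norm_psi x : `|psi x| = 1.
Proof.
apply/eqP; rewrite -(pexpr_eq1 (ltnW (charp_gt1 F))) // -normrX -psiMn.
by rewrite mulrn_pchar ?charp_pchar // psi0 normr1.
Qed.

Lemma conj_psi x : (psi x)^* = psi (- x).
Proof.
apply: (mulfI (psi_neq0 x)); rewrite -psiD subrr psi0.
by rewrite -normCK norm_psi expr1n.
Qed.

Section GaussSum.
Hypothesis oddF : odd q.

Definition gauss (s : F) : algC := \sum_(t : F) psi (s * t ^+ 2).

Lemma gauss_mulN s : s != 0 -> gauss s * gauss (- s) = q%:R.
Proof.
move=> s_neq0; have two_neq0 := natr2_neq0 oddF.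
have lin_inj (u : F) : injective (fun t => 2%:R * t - u).
  by move=> t1 t2 /addIr /(mulfI two_neq0).
(* [s t^2 - s v^2 = s u (2 t - u)] for [v = u - t] *)
transitivity (\sum_(t : F) \sum_(u : F) psi (s * u * (2%:R * t - u))).
  rewrite /gauss mulr_suml; apply: eq_bigr => t _.
  rewrite mulr_sumr (reindex_inj (addIr (- t))) /=; apply: eq_bigr => u _.
  by rewrite -psiD; congr psi; ring.
rewrite exchange_big (bigD1 0) //= [X in _ + X]big1 => [|u u_neq0].
  by under eq_bigr do rewrite mulr0 mul0r psi0; rewrite sumr_const addr0.
transitivity (\sum_(t : F) psi (s * u * t)).
  by rewrite [RHS](reindex_inj (lin_inj u)).
by rewrite sum_psi_mul mulf_eq0 (negPf s_neq0) (negPf u_neq0).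
Qed.

Lemma gauss_nsqrt s : gauss s = \sum_(a : F) (nsqrt a)%:R * psi (s * a).
Proof.
rewrite /gauss /nsqrt; under [RHS]eq_bigr do rewrite -sum1_card natr_sum mulr_suml.
rewrite (exchange_big_dep xpredT) //=; apply: eq_bigr => t _.
by rewrite (big_pred1 (t ^+ 2)) ?mul1r // => a; rewrite inE eq_sym.
Qed.

Lemma gaussN s : s != 0 -> gauss (- s) = (-1) ^+ (q %/ 2) * gauss s.
Proof.
move=> s_neq0; rewrite -signr_odd.
case: (boolP (odd (q %/ 2))) => [odd_half | /(sqrN1P oddF) [i i2]].
  have noN1sqrt (i : F) : i ^+ 2 != -1.
    apply/eqP => i2; suff : ~~ odd (q %/ 2) by rewrite odd_half.
    by apply/(sqrN1P oddF); exists i.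
  rewrite expr1 mulN1r; apply/eqP; rewrite -addr_eq0.
  rewrite !gauss_nsqrt [X in X + _](reindex_inj (@oppr_inj F)) -big_split /=.
  under eq_bigr do rewrite mulrNN -mulrDl -natrD addnC nsqrtN //.
  by rewrite -mulr_sumr sum_psi_mul (negPf s_neq0) mulr0.
have i_neq0 : i != 0 by apply: contra_eq_neq i2 => ->; rewrite expr0n eq_sym oppr_eq0 oner_eq0.
rewrite expr0 mul1r /gauss (reindex_inj (mulfI i_neq0)) /=.
by apply: eq_bigr => t _; rewrite exprMn i2 mulN1r mulrNN.
Qed.

Lemma gauss_sqr s : s != 0 -> gauss s ^+ 2 = (-1) ^+ (q %/ 2) * q%:R.
Proof. by move=> s_neq0; rewrite -(gauss_mulN s_neq0) (gaussN s_neq0) mulrCA signrMK expr2. Qed.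

Lemma sum_psi_quad s w : s != 0 ->
  \sum_(t : F) psi (s * t ^+ 2 + w * t) = psi (- (w ^+ 2 / (4%:R * s))) * gauss s.
Proof.
move=> s_neq0; have two_neq0 := natr2_neq0 oddF.
rewrite /gauss mulr_sumr (reindex_inj (addIr (- (w / (2%:R * s))))) /=.
apply: eq_bigr => t _; rewrite -psiD; congr psi.
by field; rewrite s_neq0 (natr4_neq0 oddF) two_neq0.
Qed.

Lemma sum_psi_inv c : \sum_(s : F | s != 0) psi (c / s) = (if c == 0 then q%:R else 0) - 1.
Proof.
rewrite -sum_psi_mul [in RHS](bigD1 0) //= mulr0 psi0 addrAC subrr add0r.
by rewrite [RHS](reindex_inj (@invr_inj F)); apply: eq_bigl => s; rewrite /= invr_eq0.
Qed.

Section ConeSum.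
Variable d : nat.
Hypothesis even_d : ~~ odd d.
Local Notation V := 'rV[F]_d.

Definition cone_sum (w : V) : algC := \sum_(m : V | sqnorm m == 0) psi (dotp m w).

Lemma sum_psi_dotp (w : V) : \sum_(m : V) psi (dotp m w) = if w == 0 then q%:R ^+ d else 0.
Proof.
rewrite /dotp; under eq_bigr do under eq_bigr do rewrite mulrC.
under eq_bigr do rewrite psi_sum.
rewrite (sum_rV_prod (fun i t => psi (w ord0 i * t))).
under eq_bigr do rewrite sum_psi_mul.
have [->|w_neq0] := eqVneq w 0.
  by under eq_bigr do rewrite mxE eqxx; rewrite prodr_const card_ord.
have [i w_i] : exists i, w ord0 i != 0.
  apply/existsP; apply: contraNT w_neq0 => /existsPn w0.
  by apply/eqP/rowP => i; rewrite mxE; apply/eqP/negPn.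
by rewrite (bigD1 i) //= (negPf w_i) mul0r.
Qed.

Lemma sum_psi_sqnorm_dotp s (w : V) : s != 0 ->
  \sum_(m : V) psi (sqnorm m * s + dotp m w)
  = psi (- (sqnorm w / (4%:R * s))) * ((-1) ^+ (q %/ 2) * q%:R) ^+ d./2.
Proof.
move=> s_neq0.
transitivity (\prod_(i < d) \sum_(t : F) psi (s * t ^+ 2 + w ord0 i * t)).
  rewrite -(sum_rV_prod (fun i t => psi (s * t ^+ 2 + w ord0 i * t))).
  apply: eq_bigr => m _; rewrite -psi_sum /sqnorm /dotp mulr_suml -big_split /=.
  by congr psi; apply: eq_bigr => i _; ring.
under eq_bigr do rewrite sum_psi_quad //.
rewrite big_split /= -psi_sum prodr_const card_ord -(gauss_sqr s_neq0) -exprM.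
by rewrite mul2n (even_halfK even_d) /sqnorm mulr_suml -sumrN.
Qed.

Lemma cone_sumE (w : V) : q%:R * cone_sum w
  = (if w == 0 then q%:R ^+ d else 0)
    + ((-1) ^+ (q %/ 2) * q%:R) ^+ d./2 * ((if sqnorm w == 0 then q%:R else 0) - 1).
Proof.
have sum_s (m : V) : q%:R * (if sqnorm m == 0 then psi (dotp m w) else 0)
    = \sum_(s : F) psi (sqnorm m * s + dotp m w).
  under eq_bigr do rewrite psiD; rewrite -mulr_suml sum_psi_mul.
  by case: ifP; rewrite ?mul0r ?mulr0.
rewrite /cone_sum big_mkcond mulr_sumr; under eq_bigr do rewrite sum_s.
rewrite exchange_big (bigD1 0) //=; under eq_bigr do rewrite mulr0 add0r.
rewrite sum_psi_dotp; congr (_ + _).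
under eq_bigr => s s_neq0 do rewrite sum_psi_sqnorm_dotp //.
rewrite -mulr_suml mulrC; congr (_ * _).
under eq_bigr do rewrite invfM mulrA -mulNr.
by rewrite sum_psi_inv oppr_eq0 mulf_eq0 invr_eq0 (negPf (natr4_neq0 oddF)) orbF.
Qed.
End ConeSum.

End GaussSum.
End AdditiveCharacter.

Section Fourier.
Variables (F : finFieldType) (d : nat).
Hypotheses (oddF : odd #|F|) (even_d : ~~ odd d).
Local Notation q := #|F|.
Local Notation V := 'rV[F]_d.
Local Notation Qd := (q%:R ^+ d : algC).

Lemma dotpB (m x y : V) : dotp m (x - y) = dotp m x - dotp m y.
Proof. by rewrite /dotp -sumrB; apply: eq_bigr => i _; rewrite !mxE mulrBr. Qed.

Lemma norm_fourier (A : {set V}) m :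
  `|fourier A m| ^+ 2 = Qd^-1 ^+ 2 * \sum_(x in A) \sum_(y in A) chi (dotp m (x - y)).
Proof.
rewrite normCKC /fourier rmorphM fmorphV rmorphXn /= conjC_nat rmorph_sum /=.
rewrite mulrACA -expr2 mulr_suml; congr (_ * _); apply: eq_bigr => x _.
rewrite mulr_sumr; apply: eq_bigr => y _.
by rewrite (conj_psi (chiD oddF) (chi0 oddF)) opprK -(chiD oddF) dotpB.
Qed.

Lemma Omega0_cone (A : {set V}) :
  Omega0 A = Qd^-1 ^+ 2 * \sum_(x in A) \sum_(y in A) cone_sum (chi (F:=F)) (x - y).
Proof.
rewrite /Omega0; under eq_bigr do rewrite norm_fourier.
rewrite -mulr_sumr exchange_big /=; congr (_ * _); apply: eq_bigr => x _.
by rewrite exchange_big.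
Qed.

Lemma sum_diag (A : {set V}) :
  \sum_(x in A) \sum_(y in A) (if x - y == 0 then Qd else 0) = #|A|%:R * Qd.
Proof.
transitivity (\sum_(x in A) Qd); last by rewrite sumr_const mulr_natl.
apply: eq_bigr => x xA.
rewrite (bigD1 x) //= subrr eqxx big1 ?addr0 // => y /andP [_ y_neq_x].
by rewrite subr_eq0 eq_sym (negPf y_neq_x).
Qed.

Lemma sum_ZR (A : {set V}) :
  \sum_(x in A) \sum_(y in A) (if sqnorm (x - y) == 0 then q%:R else 0 : algC)
  = (ZR A)%:R * q%:R.
Proof.
rewrite /ZR -sum1_card natr_sum mulr_suml pair_big_dep /= big_mkcond [RHS]big_mkcond /=.
apply: eq_bigr => [[x y]] _; rewrite !inE /=.
by case: (x \in A); case: (y \in A); case: (_ == 0); rewrite ?mul1r.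
Qed.

Lemma Omega0E (A : {set V}) :
  q%:R * Qd ^+ 2 * Omega0 A
  = #|A|%:R * Qd + ((-1) ^+ (q %/ 2) * q%:R) ^+ d./2 * ((ZR A)%:R * q%:R - #|A|%:R ^+ 2).
Proof.
have Qd_neq0 : Qd != 0 by rewrite expf_neq0 // (natr_card_neq0 _ 0).
rewrite Omega0_cone mulrA -(mulrA q%:R) -exprMn mulfV // expr1n mulr1 mulr_sumr.
under eq_bigr do rewrite mulr_sumr.
have cone_sumE_chi := cone_sumE (chiD oddF) (chi0 oddF) (chi_nontrivial oddF) oddF even_d.
under eq_bigr do under eq_bigr do rewrite cone_sumE_chi.
under eq_bigr do rewrite big_split /= -mulr_sumr sumrB sumr_const.
rewrite big_split /= -mulr_sumr sumrB sumr_const sum_diag sum_ZR.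
by rewrite -[#|A|%:R *+ #|A|]mulr_natr expr2.
Qed.

Lemma ZR_Omega0 (A : {set V}) : (0 < d)%N ->
  (ZR A)%:R = #|A|%:R ^+ 2 / q%:R
              + (-1) ^+ (q %/ 2 * d./2) * q%:R ^+ (3 * d./2) * Omega0 A
              - (-1) ^+ (q %/ 2 * d./2) * q%:R ^+ (d./2).-1 * #|A|%:R.
Proof.
move=> d_gt0; have key := Omega0E A.
have h_gt0 : (0 < d./2)%N by rewrite half_gt0; move: d_gt0 even_d; case: d => [|[|]].
set x : algC := q%:R in key *; set y := x ^+ (d./2).-1.
have x_neq0 : x != 0 := natr_card_neq0 _ 0.
have y_neq0 : y != 0 by rewrite expf_neq0.
have xh : x ^+ d./2 = x * y by rewrite -exprS prednK.
have xd : x ^+ d = (x * y) ^+ 2 by rewrite -xh -exprM mulnC mul2n even_halfK.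
rewrite exprMn -(exprM (-1)) xh xd in key.
rewrite [(3 * _)%N]mulnC [x ^+ _]exprM xh.
set tau := (-1) ^+ _ in key *.
have /orP [] : (tau == 1) || (tau == -1).
  by rewrite -sqrf_eq1 -exprM mulnC exprM sqrrN !expr1n.
all: move=> /eqP tau_eq; rewrite tau_eq in key *.
all: have c_neq0 : x * ((x * y) ^+ 2) ^+ 2 != 0 by rewrite !mulf_neq0 ?expf_neq0 ?mulf_neq0.
all: rewrite -[Omega0 A](mulKf c_neq0) key; field; by rewrite x_neq0 y_neq0.
Qed.

End Fourier.

Theorem proposition3p5 (F : finFieldType) (d : nat) (A : {set 'rV[F]_d}) :
  odd #|F| -> (0 < d)%N -> ~~ odd d ->
  ((d %% 4 == 2)%N && (#|F| %% 4 == 3)%N ->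
     (ZR A)%:R / 2 =
       (#|A|%:R ^+ 2) / (2 * #|F|%:R)
       - (#|F|%:R ^+ ((3 * d) %/ 2)) / 2 * Omega0 A
       + (#|F|%:R ^+ ((d - 2) %/ 2)) * #|A|%:R / 2 :> algC)
  /\
  ((d %% 4 == 0)%N || ((d %% 4 == 2)%N && (#|F| %% 4 == 1)%N) ->
     (ZR A)%:R / 2 =
       (#|A|%:R ^+ 2) / (2 * #|F|%:R)
       + (#|F|%:R ^+ ((3 * d) %/ 2)) / 2 * Omega0 A
       - (#|F|%:R ^+ ((d - 2) %/ 2)) * #|A|%:R / 2 :> algC).
Proof.
move=> oddF d_gt0 even_d; have := ZR_Omega0 oddF even_d A d_gt0.
have -> : ((3 * d) %/ 2 = 3 * d./2)%N by rewrite divn2; have := modn2 d; lia.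
have -> : ((d - 2) %/ 2 = (d./2).-1)%N by rewrite divn2; have := modn2 d; lia.
rewrite -signr_odd oddM divn2 (odd_half_odd oddF) (odd_half_even even_d).
move=> ZR_eq; split => [/andP [/eqP d4 /eqP q4] | /orP [/eqP d4 | /andP [/eqP d4 /eqP q4]]].
all: rewrite ZR_eq d4 ?q4 /= ?andbF; field; exact: natr_card_neq0 0.
Qed.
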